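(* Let $A$ be a finite alphabet and $Y\subseteq A^+$ a set of nonempty words. Let $\mathcal{S}=(A,Y,R')$ be the flat splicing system with $R'=\{\langle a\mid1-1\mid b\rangle : a,b\in A\}$. Then $Y^{\leftarrow_*}\setminus\{1\}=L(\mathcal{S})$.
   Context: $1$ denotes the empty word, $A^+=A^*\setminus\{1\}$. Flat splicing system $\mathcal{S}=(A,Y,R')$: rules $\langle\alpha\mid\beta-\gamma\mid\delta\rangle$ with $\alpha,\beta,\gamma,\delta\in A^*$; applying it to $u=x\alpha\beta y$ and $v=\gamma z\delta$ yields $x\alpha\gamma z\delta\beta y$. In particular $\langle a\mid1-1\mid b\rangle$ applied to $u=xay$ and $v=zb$ yields $xazby$. $L(\mathcal{S})$ is the smallest language containing $Y$ and closed under applying rules of $R'$. Iterated insertion: for $Z,Y\subseteq A^*$, $Z\leftarrow Y=\{z_1yz_2: z_1z_2\in Z, y\in Y\}$; $Y^{\leftarrow_0}=\{1\}$, $Y^{\leftarrow_{i+1}}=Y^{\leftarrow_i}\leftarrow Y$, $Y^{\leftarrow_*}=\bigcup_{i\ge0}Y^{\leftarrow_i}$. *)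

From mathcomp Require Import all_boot.
Set Implicit Arguments. Unset Strict Implicit. Unset Printing Implicit Defensive.

(* Words over alphabet A are sequences [seq A]; the empty word 1 is [::].
   Languages are predicates on words. *)
Definition lang (A : Type) := seq A -> Prop.

Record fsrule (A : Type) := FSRule { r_alpha : seq A; r_beta : seq A;
                                     r_gamma : seq A; r_delta : seq A }.

Definition fs_apply (A : Type) (r : fsrule A) (u v w : seq A) : Prop :=
  exists x y z : seq A,
    u = x ++ r_alpha r ++ r_beta r ++ y /\
    v = r_gamma r ++ z ++ r_delta r /\
    w = x ++ r_alpha r ++ r_gamma r ++ z ++ r_delta r ++ r_beta r ++ y.

Inductive fs_lang (A : Type) (Y : lang A) (R : fsrule A -> Prop) : lang A :=
| fs_init : forall w, Y w -> fs_lang Y R w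
| fs_step : forall r u v w, R r -> fs_lang Y R u -> fs_lang Y R v ->
    fs_apply r u v w -> fs_lang Y R w.

Definition insertion (A : Type) (Z Y : lang A) : lang A :=
  fun w => exists z1 z2 y, Z (z1 ++ z2) /\ Y y /\ w = z1 ++ y ++ z2.

Fixpoint iter_ins (A : Type) (Y : lang A) (i : nat) : lang A :=
  match i with
  | 0 => fun w => w = [::]
  | i.+1 => insertion (iter_ins Y i) Y
  end.

Definition iter_ins_star (A : Type) (Y : lang A) : lang A :=
  fun w => exists i, iter_ins Y i w.

Definition Rprime (A : Type) : fsrule A -> Prop :=
  fun r => exists a b : A, r = FSRule [:: a] [::] [::] [:: b].

From mathcomp Require Import all_boot.

Set Implicit Arguments.
Unset Strict Implicit.
Unset Printing Implicit Defensive.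

(** A rule <a | 1 - 1 | b> inserts a word ending in b right after an
    occurrence of a, so L(S) is built by exactly the insertions of
    iterated insertion.  Conversely, since words of Y are nonempty, every
    insertion of y into a nonempty word can be performed by such a rule:
    after the last letter a of the prefix, or, when the prefix is empty,
    by inserting the rest of the word after the last letter of y. *)

Section IteratedInsertion.

Variables (A : Type) (Y : lang A).

Lemma iter_ins_insert j v : iter_ins Y j v ->
  forall i u1 u2, iter_ins Y i (u1 ++ u2) -> iter_ins Y (i + j) (u1 ++ v ++ u2).
Proof.
elim: j v => [|j IHj] v /=; first by move=> -> i u1 u2; rewrite addn0.
move=> [z1 [z2 [y [Hz [Hy ->]]]]] i u1 u2 Hu.
rewrite addnS; exists (u1 ++ z1), (z2 ++ u2), y; split; last first.
  by split=> //; rewrite -!catA.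
by move: (IHj _ Hz _ _ _ Hu); rewrite !catA.
Qed.

Lemma iter_ins_star_insert u1 u2 v :
  iter_ins_star Y (u1 ++ u2) -> iter_ins_star Y v ->
  iter_ins_star Y (u1 ++ v ++ u2).
Proof. by move=> [i Hu] [j Hv]; exists (i + j); apply: iter_ins_insert Hu. Qed.

Lemma iter_ins_star_base y : Y y -> iter_ins_star Y y.
Proof. by move=> Hy; exists 1; exists [::], [::], y; rewrite /= cats0. Qed.

End IteratedInsertion.

Section Rprime.

Variable A : Type.

Lemma fs_apply_Rprime_insertion (r : fsrule A) u v w :
  Rprime r -> fs_apply r u v w ->
  exists u1 u2, u = u1 ++ u2 /\ w = u1 ++ v ++ u2.
Proof.
move=> [a [b ->]] [x [y [z [-> [-> ->]]]]] /=.
by exists (rcons x a), y; rewrite -cats1 -!catA.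
Qed.

Lemma fs_lang_insert_after (Y : lang A) u1 a u2 v :
  v <> [::] -> fs_lang Y (@Rprime A) (rcons u1 a ++ u2) ->
  fs_lang Y (@Rprime A) v -> fs_lang Y (@Rprime A) (rcons u1 a ++ v ++ u2).
Proof.
case/lastP: v => [//|z b] _ Hu Hv.
apply: (@fs_step _ _ _ (FSRule [:: a] [::] [::] [:: b]) _ _ _ _ Hu Hv).
  by exists a, b.
by exists u1, u2, z; rewrite /= -!cats1 -!catA.
Qed.

End Rprime.

Section FlatSplicing.

Variables (A : Type) (Y : lang A).
Hypothesis Y_nonempty : forall y, Y y -> y <> [::].

Lemma iter_ins_fs_lang i w :
  iter_ins Y i w -> w <> [::] -> fs_lang Y (@Rprime A) w.
Proof.
elim: i w => [|i IHi] w /=; first by move=> ->.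
move=> [z1 [z2 [y [Hz [Hy ->]]]]] _.
have fs_y : fs_lang Y (@Rprime A) y by apply: fs_init.
case/lastP: z1 Hz => [|x a] Hz.
  case/lastP: z2 Hz => [|z b] Hz; first by rewrite /= cats0.
  have z_nonempty : rcons z b <> [::] by case: (z).
  case/lastP: y Hy fs_y => [/Y_nonempty //|x a] _ fs_y.
  rewrite -[rcons x a]cats0 in fs_y.
  by have := fs_lang_insert_after z_nonempty fs_y (IHi _ Hz z_nonempty); rewrite cats0.
have fs_z : fs_lang Y (@Rprime A) (rcons x a ++ z2) by apply: IHi Hz _; case: (x).
exact: fs_lang_insert_after (Y_nonempty Hy) fs_z fs_y.
Qed.

Lemma fs_lang_iter_ins w :
  fs_lang Y (@Rprime A) w -> iter_ins_star Y w /\ w <> [::].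
Proof.
elim=> [y Hy | r u v {}w Rr _ [Hu _] _ [Hv v_nonempty] Happ].
  by split; [apply: iter_ins_star_base | apply: Y_nonempty].
have [u1 [u2 [Eu ->]]] := fs_apply_Rprime_insertion Rr Happ.
split; first by rewrite Eu in Hu; apply: iter_ins_star_insert.
by case: (u1) => [|//]; case: (v) v_nonempty.
Qed.

End FlatSplicing.

Theorem proposition11p8 (A : finType) (Y : seq A -> Prop)
  (HY : forall y, Y y -> y <> [::]) :
  forall w : seq A, (iter_ins_star Y w /\ w <> [::]) <-> fs_lang Y (@Rprime A) w.
Proof.
move=> w; split; last exact: fs_lang_iter_ins.
by move=> [[i Hi] w_nonempty]; apply: iter_ins_fs_lang Hi w_nonempty.
Qed.
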